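(* For any finite simple graph $G$, $$|\operatorname{nucleus}(G)|+|\operatorname{diadem}(G)|\le 2\alpha(G)\le |\operatorname{core}(G)|+|\operatorname{corona}(G)|.$$
   Context: For $X\subseteq V(G)$, $N(X)$ is the set of vertices adjacent to some vertex of $X$, and $d(X)=|X|-|N(X)|$. An independent set $S$ is critical if $d(S)=\max\{d(X):X\subseteq V(G)\}$; the empty set may be critical. A maximum critical independent set is a critical independent set of maximum cardinality. $\operatorname{nucleus}(G)$ and $\operatorname{diadem}(G)$ are, respectively, the intersection and the union of all maximum critical independent sets. $\alpha(G)$ is the independence number. $\operatorname{core}(G)$ and $\operatorname{corona}(G)$ are, respectively, the intersection and the union of all maximum independent sets of $G$. *)

From mathcomp Require Import all_boot all_order all_algebra.
Set Implicit Arguments. Unset Strict Implicit. Unset Printing Implicit Defensive.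
Import GRing.Theory Num.Theory.

Definition simple_graph (T : finType) (e : rel T) : Prop :=
  symmetric e /\ irreflexive e.

Section Defs.
Variables (T : finType) (e : rel T).

Definition nbhd (X : {set T}) : {set T} := [set y | [exists x in X, e x y]].

Definition dif (X : {set T}) : int := (#|X|%:Z - #|nbhd X|%:Z)%R.

Definition independent (S : {set T}) : bool :=
  [forall x in S, forall y in S, ~~ e x y].

Definition critical (S : {set T}) : bool :=
  [forall X : {set T}, (dif X <= dif S)%R].

Definition critical_independent (S : {set T}) : bool :=
  independent S && critical S.

Definition max_critical_independent (S : {set T}) : bool :=
  critical_independent S &&
  [forall X : {set T}, critical_independent X ==> (#|X| <= #|S|)].

Definition maximum_independent (S : {set T}) : bool :=
  independent S && [forall X : {set T}, independent X ==> (#|X| <= #|S|)].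

Definition alpha : nat := \max_(S : {set T} | independent S) #|S|.

Definition nucleus : {set T} :=
  [set x | [forall S : {set T}, max_critical_independent S ==> (x \in S)]].
Definition diadem : {set T} :=
  [set x | [exists S : {set T}, max_critical_independent S && (x \in S)]].
Definition core : {set T} :=
  [set x | [forall S : {set T}, maximum_independent S ==> (x \in S)]].
Definition corona : {set T} :=
  [set x | [exists S : {set T}, maximum_independent S && (x \in S)]].

End Defs.

From mathcomp Require Import all_boot all_order all_algebra.
From mathcomp Require Import zify.
Set Implicit Arguments. Unset Strict Implicit. Unset Printing Implicit Defensive.

(* Both inequalities come from a Hall-type exchange bound. If S is critical and
   B lies in N(S), then |B| <= |S ∩ N(B)|, since removing N(B) from S must not
   increase d; if S is maximum independent and B is independent and disjoint
   from S, the same bound holds, since swapping S ∩ N(B) for B keeps S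
   independent.  For a maximum critical independent S0, every vertex of
   diadem \ S0 has a neighbour in S0, so B := diadem \ S0 is matched into
   S0 ∩ N(B), which misses the nucleus (no vertex of a maximum critical
   independent set is adjacent to the nucleus).  Hence
   |diadem| - |S0| <= |S0| - |nucleus|, and |S0| <= alpha.  Dually, adding a
   maximum independent set S to a family with intersection I and union U
   matches I \ S into S \ U, so |I| + |U| can only grow, starting from 2 alpha
   for a single maximum independent set. *)

Section Graph.
Variables (T : finType) (e : rel T).

Lemma nbhdP (X : {set T}) y :
  reflect (exists2 x, x \in X & e x y) (y \in nbhd e X).
Proof. by rewrite inE; apply: (iffP exists_inP). Qed.

Lemma nbhdS (A B : {set T}) : A \subset B -> nbhd e A \subset nbhd e B.
Proof.
move=> sAB; apply/subsetP => y /nbhdP[x xA exy]; apply/nbhdP.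
by exists x; first exact: (subsetP sAB).
Qed.

Lemma nbhdU (A B : {set T}) : nbhd e (A :|: B) = nbhd e A :|: nbhd e B.
Proof.
apply/eqP; rewrite eqEsubset subUset.
rewrite (nbhdS (subsetUl A B)) (nbhdS (subsetUr A B)) !andbT.
apply/subsetP => y /nbhdP[x /setUP[] xAB exy]; apply/setUP.
- by left; apply/nbhdP; exists x.
- by right; apply/nbhdP; exists x.
Qed.

Lemma independentP (S : {set T}) :
  reflect {in S &, forall x y, ~~ e x y} (independent e S).
Proof.
apply: (iffP forall_inP) => [H x y xS yS | H x xS].
  by move/forall_inP: (H x xS); apply.
by apply/forall_inP => y; apply: H.
Qed.

Lemma independent_setD_nbhd (X : {set T}) : independent e (X :\: nbhd e X).
Proof.
apply/independentP => x y; rewrite !in_setD => /andP[_ xX] /andP[yN _].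
by apply/negP => exy; case/negP: yN; apply/nbhdP; exists x.
Qed.

Lemma criticalP (S : {set T}) :
  reflect (forall X : {set T}, #|X| + #|nbhd e S| <= #|S| + #|nbhd e X|)
    (critical e S).
Proof. by apply: (iffP forallP) => H X; have := H X; rewrite /dif; lia. Qed.

Lemma critical_setU (A B : {set T}) :
  critical e A -> critical e B -> critical e (A :|: B).
Proof.
move=> /criticalP cA /criticalP cB; apply/criticalP => X.
have := cA X; have := cB (A :&: B); have := cardsUI A B.
have := cardsUI (nbhd e A) (nbhd e B); rewrite -nbhdU.
have : #|nbhd e (A :&: B)| <= #|nbhd e A :&: nbhd e B|.
  by apply: subset_leq_card; rewrite subsetI !nbhdS ?subsetIl ?subsetIr.
lia.
Qed.

Lemma exists_critical : exists X, critical e X.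
Proof.
have [X _ Xmax] :=
  @Order.TotalTheory.arg_maxP _ _ {set T} set0 xpredT (dif e) erefl.
by exists X; apply/forallP => Y; apply: Xmax.
Qed.

Lemma max_critical_independentP (S : {set T}) :
  max_critical_independent e S ->
  [/\ independent e S, critical e S &
      forall X, independent e X -> critical e X -> #|X| <= #|S|].
Proof.
case/andP => /andP[iS cS] /forallP Smax; split => // X iX cX.
by apply: (implyP (Smax X)); rewrite /critical_independent iX.
Qed.

Lemma maximum_independentP (S : {set T}) :
  maximum_independent e S ->
  independent e S /\ forall X, independent e X -> #|X| <= #|S|.
Proof. by case/andP => iS /forallP Smax; split => // X; apply/implyP. Qed.

Lemma leq_alpha (S : {set T}) : independent e S -> #|S| <= alpha e.
Proof.
exact: (@leq_bigmax_cond _ (independent e) (fun S : {set T} => #|S|)).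
Qed.

Lemma exists_maximum_independent_alpha :
  exists2 S, maximum_independent e S & #|S| = alpha e.
Proof.
have i0 : independent e set0 by apply/independentP => x y; rewrite in_set0.
have [S iS Smax] := arg_maxnP (fun S : {set T} => #|S|) i0.
exists S; first by rewrite /maximum_independent iS; apply/forall_inP => X /Smax.
by apply/eqP; rewrite eqn_leq leq_alpha //; apply/bigmax_leqP => X /Smax.
Qed.

Lemma nucleus_subset (S : {set T}) :
  max_critical_independent e S -> nucleus e \subset S.
Proof. by move=> mS; apply/subsetP => x; rewrite inE => /forall_inP; apply. Qed.

Lemma subset_diadem (S : {set T}) :
  max_critical_independent e S -> S \subset diadem e.
Proof.
by move=> mS; apply/subsetP => x xS; rewrite inE; apply/exists_inP; exists S.
Qed.

Lemma diadem_nucleus_nonadjacent :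
  {in diadem e & nucleus e, forall x y, ~~ e x y}.
Proof.
move=> x y; rewrite !inE => /exists_inP[S mS xS] /forall_inP/(_ S mS) yS.
by have [/independentP iS _ _] := max_critical_independentP mS; apply: iS.
Qed.

Lemma setI_nbhd_subset_setD (S A C B : {set T}) :
  {in A & C, forall x y, ~~ e x y} -> B \subset A ->
  S :&: nbhd e B \subset S :\: C.
Proof.
move=> AC sBA; apply/subsetP => y; rewrite in_setI in_setD andbC.
case/andP=> /nbhdP[b bB eby] ->; rewrite andbT; apply/negP => yC.
by move: (AC b y (subsetP sBA b bB) yC); rewrite eby.
Qed.

Hypothesis sym : symmetric e.

Lemma critical_setD_nbhd (X : {set T}) :
  critical e X -> critical e (X :\: nbhd e X).
Proof.
move=> /criticalP cX; apply/criticalP => Z.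
have := cX Z; have := cardsID (nbhd e X) X; have := cardsID X (nbhd e X).
have : #|nbhd e (X :\: nbhd e X)| <= #|nbhd e X :\: X|.
  apply/subset_leq_card/subsetP => y /nbhdP[x]; rewrite !in_setD.
  case/andP=> xN xX exy; apply/andP; split; last by apply/nbhdP; exists x.
  by apply: contraNN xN => yX; apply/nbhdP; exists y; rewrite // sym.
rewrite setIC; lia.
Qed.

Lemma exists_max_critical_independent :
  exists S, max_critical_independent e S.
Proof.
have [X cX] := exists_critical.
have ciY : critical_independent e (X :\: nbhd e X).
  by rewrite /critical_independent independent_setD_nbhd critical_setD_nbhd.
have [S ciS Smax] := arg_maxnP (fun S : {set T} => #|S|) ciY.
by exists S; rewrite /max_critical_independent ciS; apply/forall_inP => Y /Smax.
Qed.

Lemma independent_setU_setD_nbhd (S A : {set T}) :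
  independent e S -> independent e A -> independent e (S :|: (A :\: nbhd e S)).
Proof.
move=> /independentP iS /independentP iA.
have SA x y : x \in S -> y \in A :\: nbhd e S -> ~~ e x y.
  rewrite in_setD => xS /andP[yN _].
  by apply: contraNN yN => exy; apply/nbhdP; exists x.
apply/independentP => x y; rewrite !in_setU.
case/orP=> [xS|xA] /orP[yS|yA]; [exact: iS | exact: SA | | ].
- by rewrite sym; apply: SA.
- by move: xA yA; rewrite !in_setD => /andP[_ xA] /andP[_ yA]; apply: iA.
Qed.

(* Otherwise S0 could be enlarged by the critical independent set
   (S0 ∪ S1) \ N(S0 ∪ S1), which contains v. *)
Lemma diadem_setD_subset_nbhd (S0 : {set T}) :
  max_critical_independent e S0 -> diadem e :\: S0 \subset nbhd e S0.
Proof.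
move=> mS0; have [iS0 cS0 S0max] := max_critical_independentP mS0.
apply/subsetP => v; rewrite in_setD inE => /andP[vS0 /exists_inP[S1 mS1 vS1]].
have [/independentP iS1 cS1 _] := max_critical_independentP mS1.
apply: contraNT vS0 => vN.
set X := S0 :|: S1; set Y := X :\: nbhd e X.
have cY : critical e Y by apply/critical_setD_nbhd/critical_setU.
have YN : Y :\: nbhd e S0 = Y.
  apply/setDidPl; rewrite disjoints_subset /Y setDE.
  by apply: subset_trans (subsetIr _ _) _; rewrite setCS nbhdS ?subsetUl.
have iS0Y : independent e (S0 :|: Y).
  rewrite -YN; apply: independent_setU_setD_nbhd => //.
  exact: independent_setD_nbhd.
have S0Y : S0 :|: Y = S0.
  apply/eqP; rewrite eq_sym eqEcard subsetUl.
  by apply: S0max; rewrite ?critical_setU.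
have vY : v \in Y.
  rewrite in_setD in_setU vS1 orbT andbT nbhdU in_setU negb_or vN /=.
  by apply/nbhdP => -[x xS1 exv]; move: (iS1 x v xS1 vS1); rewrite exv.
by rewrite -S0Y in_setU vY orbT.
Qed.

Lemma hall_critical (S B : {set T}) :
  critical e S -> B \subset nbhd e S -> #|B| <= #|S :&: nbhd e B|.
Proof.
move=> /criticalP cS sBN.
have := cS (S :\: nbhd e B); have := cardsID (nbhd e B) S.
have := cardsID B (nbhd e S); rewrite (setIidPr sBN).
have : #|nbhd e (S :\: nbhd e B)| <= #|nbhd e S :\: B|.
  apply/subset_leq_card/subsetP => y /nbhdP[x]; rewrite !in_setD.
  case/andP=> xN xS exy; apply/andP; split; last by apply/nbhdP; exists x.
  by apply: contraNN xN => yB; apply/nbhdP; exists y; rewrite // sym.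
lia.
Qed.

Lemma hall_maximum_independent (S B : {set T}) :
  maximum_independent e S -> independent e B -> [disjoint B & S] ->
  #|B| <= #|S :&: nbhd e B|.
Proof.
move=> /maximum_independentP[iS Smax] iB dBS.
have := Smax _ (independent_setU_setD_nbhd iB iS).
have : B :&: (S :\: nbhd e B) = set0.
  by apply/eqP; rewrite setI_eq0; apply: disjointWr dBS; apply: subsetDl.
move=> BSN; have := cardsUI B (S :\: nbhd e B); rewrite BSN cards0.
have := cardsID (nbhd e B) S; lia.
Qed.

Lemma card_nucleus_diadem : #|nucleus e| + #|diadem e| <= 2 * alpha e.
Proof.
have [S0 mS0] := exists_max_critical_independent.
have [iS0 cS0 _] := max_critical_independentP mS0.
set B := diadem e :\: S0.
have matchB : #|B| <= #|S0 :&: nbhd e B|.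
  by apply: hall_critical cS0 _; apply: diadem_setD_subset_nbhd.
have avoid_nucleus : #|S0 :&: nbhd e B| <= #|S0 :\: nucleus e|.
  apply/subset_leq_card/(setI_nbhd_subset_setD S0 diadem_nucleus_nonadjacent).
  exact: subsetDl.
have := cardsID (nucleus e) S0; rewrite (setIidPr (nucleus_subset mS0)).
have := cardsID S0 (diadem e); rewrite (setIidPr (subset_diadem mS0)) -/B.
have := leq_alpha iS0; lia.
Qed.

Lemma card_setI_setU_maximum_independent (I U S : {set T}) :
  maximum_independent e S -> I \subset U -> {in I & U, forall x y, ~~ e x y} ->
  #|I| + #|U| <= #|I :&: S| + #|U :|: S|.
Proof.
move=> mS sIU IU.
have iB : independent e (I :\: S).
  apply/independentP => x y /setDP[xI _] /setDP[yI _].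
  exact: IU (subsetP sIU y yI).
have dBS : [disjoint I :\: S & S].
  by rewrite -setI_eq0 setDE -setIA [~: S :&: S]setIC setICr setI0.
have matchB := hall_maximum_independent mS iB dBS.
have avoid_union : #|S :&: nbhd e (I :\: S)| <= #|S :\: U|.
  exact/subset_leq_card/(setI_nbhd_subset_setD S IU (subsetDl I S)).
have := cardsID S I; have := cardsUI U S; have := cardsID U S.
rewrite [U :&: S]setIC; lia.
Qed.

Lemma core_bigcap : core e = \bigcap_(S | maximum_independent e S) S.
Proof. by apply/setP => x; rewrite inE; apply/forall_inP/bigcapP. Qed.

Lemma corona_bigcup : corona e = \bigcup_(S | maximum_independent e S) S.
Proof. by apply/setP => x; rewrite inE; apply/exists_inP/bigcupP. Qed.

Lemma card_core_corona : 2 * alpha e <= #|core e| + #|corona e|.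
Proof.
have [A0 mA0 <-] := exists_maximum_independent_alpha.
have [/independentP iA0 _] := maximum_independentP mA0.
have core_A0 : core e \subset A0.
  by apply/subsetP => x; rewrite inE => /forall_inP; apply.
have A0_corona : A0 \subset corona e.
  by apply/subsetP => x xA0; rewrite inE; apply/exists_inP; exists A0.
rewrite -(setIidPr core_A0) -(setUidPr A0_corona) core_bigcap corona_bigcup.
pose K I U := {in A0 :&: I & A0 :|: U, forall x y, ~~ e x y} /\
  2 * #|A0| <= #|A0 :&: I| + #|A0 :|: U|.
suff [] : K (\bigcap_(S | maximum_independent e S) S)
            (\bigcup_(S | maximum_independent e S) S) by [].
apply: (big_rec2 K) => [|S I U mS [IU cardIU]].
  by rewrite /K setIT setU0; split=> //; lia.
have [/independentP iS _] := maximum_independentP mS.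
rewrite /K setICA setUCA; split.
  by move=> x y /setIP[xS xI] /setUP[yS|yU]; [apply: iS | apply: IU].
rewrite setIC setUC; apply: leq_trans cardIU _.
apply: card_setI_setU_maximum_independent => //.
exact: subset_trans (subsetIl _ _) (subsetUl _ _).
Qed.

End Graph.

Theorem corollary4p1 (T : finType) (e : rel T) :
  simple_graph e ->
  (#|nucleus e| + #|diadem e| <= 2 * alpha e)%N /\
  (2 * alpha e <= #|core e| + #|corona e|)%N.
Proof.
by case=> sym _; split; [apply: card_nucleus_diadem | apply: card_core_corona].
Qed.
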